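(* If Algorithm GP (described below), run on a graph $G$, returns a pair $(X,\mathcal{B})$, then $(X,\mathcal{B})$ is a good partition of $G$ (regardless of which admissible vertices are chosen in step (c)).
   Context: Definitions. Partitions are into nonempty blocks; $\mathcal{A}\sqsubseteq\mathcal{B}$ means every block of $\mathcal{A}$ is contained in a block of $\mathcal{B}$; $\mathsf{CC}(H)$ is the partition of $V(H)$ into vertex sets of connected components. For a maximal clique $X$ of a chordal graph $H$, $H$ is an $X$-interval graph if there is an ordering $(K_1,\dots,K_k,X)$ of all maximal cliques of $H$ ending with $X$ such that for each vertex the cliques containing it are consecutive. For $X\subseteq V(G)$, $Y\subseteq X$, a partition $\mathcal{B}$ of $V(G)\setminus X$, a block $B$ and $x\in Y$: $N(x)$ is minimal in $B$ for $Y$ if $N(x)\cap B\subseteq N(y)$ for all $y\in Y$; $x$ is removable from $Y$ for $\mathcal{B}$ if $N(x)$ is minimal for $Y$ in at least $|\mathcal{B}|-1$ blocks. A good partition of $G$ is a pair $(X,\mathcal{B})$, $X$ a maximal clique, $\mathcal{B}$ a partition of $V(G)\setminus X$, with (i) $\mathsf{CC}(G-X)\sqsubseteq\mathcal{B}$; (ii) $G[X\cup B]$ is an $X$-interval graph for all $B\in\mathcal{B}$; (iii) there is an ordering $(x_1,\dots,x_t)$ of $X$ with each $x_i$ removable from $\{x_i,\dots,x_t\}$ for $\mathcal{B}$. For $W\subseteq X$, $x\in W$ and a partition $\mathcal{A}$ of $V(G)\setminus X$, $\mathsf{notmin}(x,W,\mathcal{A})$ is the union of the blocks of $\mathcal{A}$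 in which $N(x)$ is not minimal for $W$. Algorithm GP on input $G$: if $G$ is not chordal, return ''no''. Otherwise, for each maximal clique $X$ of $G$: (a) if some component $C$ of $G-X$ has $G[X\cup C]$ not an $X$-interval graph, go to the next $X$; (b) set $\mathcal{A}\leftarrow\mathsf{CC}(G-X)$, $W\leftarrow X$; (c) while $W\neq\emptyset$: if there exists $w\in W$ such that $G[X\cup\mathsf{notmin}(w,W,\mathcal{A})]$ is an $X$-interval graph, choose any such $w$, replace the blocks of $\mathcal{A}$ contained in $\mathsf{notmin}(w,W,\mathcal{A})$ by their union, and set $W\leftarrow W\setminus\{w\}$; otherwise leave the while loop; (d) if $W=\emptyset$, return $(X,\mathcal{A})$. If no maximal clique led to a return, return ''no''. *)

(* Graphs: a finite simple graph is a symmetric irreflexive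
   relation [e : rel T] on a finite type [T] of vertices.  Induced subgraphs
   G[S] are represented by their vertex subset [S : {set T}]. *)
From mathcomp Require Import all_boot.
Set Implicit Arguments. Unset Strict Implicit. Unset Printing Implicit Defensive.

Section Graphs.
Variables (T : finType) (e : rel T).

Definition nbhd (x : T) : {set T} := [set y | e x y].

Definition chordal_on (S : {set T}) : Prop :=
  forall c : seq T, uniq c -> 4 <= size c -> {subset c <= S} -> cycle e c ->
    exists u v, [/\ u \in c, v \in c, u != v &
                    [&& v != next c u, u != next c v & e u v]].

Definition clique_on (S K : {set T}) : Prop :=
  K \subset S /\ {in K &, forall x y, x != y -> e x y}.

Definition maxclique_on (S K : {set T}) : Prop :=
  clique_on S K /\ forall K', clique_on S K' -> K \subset K' -> K' = K.

(* For a maximal clique X of the chordal graph H = G[S]: H is an X-interval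
   graph iff there is an ordering (K_1, ..., K_k, X) of all maximal cliques
   of H ending with X such that for every vertex the cliques containing it
   are consecutive. *)
Definition Xinterval (S X : {set T}) : Prop :=
  [/\ chordal_on S, maxclique_on S X &
    exists s : seq {set T},
      [/\ uniq (rcons s X),
          (forall K, K \in rcons s X <-> maxclique_on S K) &
          forall v i j k, v \in S -> i <= j -> j <= k -> k < size (rcons s X) ->
            v \in nth set0 (rcons s X) i -> v \in nth set0 (rcons s X) k ->
            v \in nth set0 (rcons s X) j]].

Definition induced_rel (S : {set T}) : rel T :=
  [rel x y | [&& e x y, x \in S & y \in S]].

Definition CC (S : {set T}) : {set {set T}} :=
  [set [set y in S | connect (induced_rel S) x y] | x in S].

Definition refines (A B : {set {set T}}) : Prop :=
  forall a, a \in A -> exists2 b, b \in B & a \subset b.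

Definition nmin (Y : {set T}) (B : {set T}) (x : T) : bool :=
  [forall y in Y, (nbhd x :&: B) \subset nbhd y].

Definition removable (BB : {set {set T}}) (Y : {set T}) (x : T) : bool :=
  #|BB| - 1 <= #|[set B in BB | nmin Y B x]|.

Fixpoint removable_seq (BB : {set {set T}}) (s : seq T) : Prop :=
  match s with
  | [::] => True
  | x :: s' => removable BB [set y in x :: s'] x /\ removable_seq BB s'
  end.

Definition good_partition (X : {set T}) (BB : {set {set T}}) : Prop :=
  [/\ maxclique_on setT X,
      partition BB (~: X),
      refines (CC (~: X)) BB,
      (forall B, B \in BB -> Xinterval (X :|: B) X) &
      exists s : seq T, [/\ uniq s, [set x in s] = X & removable_seq BB s]].

Definition notmin (x : T) (W : {set T}) (A : {set {set T}}) : {set T} :=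
  \bigcup_(B in A | ~~ nmin W B x) B.

(* replace the blocks of A contained in N by their union
   (N is a union of blocks of A) *)
Definition merge_blocks (A : {set {set T}}) (N : {set T}) : {set {set T}} :=
  [set B in A | ~~ (B \subset N)] :|: (if N == set0 then set0 else [set N]).

(* Runs of the while loop of step (c) for a fixed maximal clique X:
   [gp_loop X A W A'] means that starting from the current pair (A, W)
   some sequence of admissible choices of w leads to W = set0 with final
   partition A'. *)
Inductive gp_loop (X : {set T}) :
    {set {set T}} -> {set T} -> {set {set T}} -> Prop :=
  | gp_loop_done (A : {set {set T}}) : gp_loop X A set0 A
  | gp_loop_step (A : {set {set T}}) (W : {set T}) (w : T) (A' : {set {set T}}) :
      w \in W ->
      Xinterval (X :|: notmin w W A) X ->
      gp_loop X (merge_blocks A (notmin w W A)) (W :\ w) A' ->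
      gp_loop X A W A'.

(* Algorithm GP, run on G, may return (X, A): G is chordal, X is a maximal
   clique of G passing step (a), and some run of the loop (b)-(c) ends with
   W empty and partition A.  (Which maximal clique is tried first is
   immaterial: any X whose run succeeds can be the returned one.) *)
Definition GP_returns (X : {set T}) (A : {set {set T}}) : Prop :=
  [/\ chordal_on setT,
      maxclique_on setT X,
      (forall C, C \in CC (~: X) -> Xinterval (X :|: C) X) &
      gp_loop X (CC (~: X)) X A].

End Graphs.

From mathcomp Require Import all_boot.

(* Along every run of the loop, A stays a partition of V(G) \ X coarsening
   CC(G - X) whose blocks are X-interval: the only new block ever created is
   notmin(w, W, A), which was tested.  When w leaves W, every block of any
   later partition other than the one containing notmin(w, W, A) avoids it,
   so it is a union of blocks of A in which N(w) is minimal for W; minimality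
   is preserved under unions, hence w is removable from W for the final
   partition, and the removal order of the run witnesses condition (iii). *)

Set Implicit Arguments.
Unset Strict Implicit.
Unset Printing Implicit Defensive.

Section GoodPartition.
Variables (T : finType) (e : rel T).

Lemma refines_refl (P : {set {set T}}) : refines P P.
Proof. by move=> B BP; exists B. Qed.

Lemma refines_trans (P Q R : {set {set T}}) :
  refines P Q -> refines Q R -> refines P R.
Proof.
move=> PQ QR B BP; have [C CQ BC] := PQ B BP; have [E ER CE] := QR C CQ.
by exists E => //; apply: subset_trans CE.
Qed.

Lemma partition_CC (S : {set T}) : symmetric e -> partition (CC e S) S.
Proof.
move=> e_sym; apply: equivalence_partitionP => x y z _ _ _.
have symS : connect_sym (induced_rel e S).
  apply: sym_connect_sym => a b.
  by rewrite /induced_rel /= e_sym [(a \in S) && _]andbC.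
split=> [|xy]; first exact: connect0.
by apply/idP/idP; apply: connect_trans; rewrite // symS.
Qed.

Lemma mem_merge_blocks (P : {set {set T}}) (N B : {set T}) :
  (B \in merge_blocks P N) =
    (B \in P) && ~~ (B \subset N) || (N != set0) && (B == N).
Proof. by rewrite /merge_blocks !inE; case: (N =P set0); rewrite ?inE. Qed.

Lemma partition_merge_blocks (P : {set {set T}}) (D N : {set T}) :
  partition P D -> N \subset D ->
  {in P, forall B : {set T}, B \subset N \/ [disjoint B & N]} ->
  partition (merge_blocks P N) D.
Proof.
move=> partP ND unionN; case/and3P: (partP) => /eqP coverP trivP set0P.
apply/and3P; split.
- rewrite eqEsubset -{2}coverP; apply/andP; split.
    apply/bigcupsP => B; rewrite mem_merge_blocks.
    case/orP => [/andP [BP _] | /andP [_ /eqP ->]] //.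
    by rewrite -coverP; apply: bigcup_sup.
  apply/subsetP => x /bigcupP [B BP xB]; apply/bigcupP.
  have [BN | nBN] := boolP (B \subset N).
    have xN : x \in N by apply: subsetP xB.
    exists N => //; rewrite mem_merge_blocks eqxx andbT.
    by apply/orP; right; apply/set0Pn; exists x.
  by exists B; rewrite // mem_merge_blocks BP nBN.
- apply/trivIsetP => B1 B2; rewrite !mem_merge_blocks.
  case/orP => [/andP [B1P B1N] | /andP [_ /eqP ->]];
  case/orP => [/andP [B2P B2N] | /andP [_ /eqP ->]]; rewrite ?eqxx //.
  + exact: (trivIsetP trivP).
  + by case: (unionN _ B1P) => // B1N'; rewrite B1N' in B1N.
  + rewrite disjoint_sym; case: (unionN _ B2P) => // B2N'.
    by rewrite B2N' in B2N.
- by rewrite mem_merge_blocks (negbTE set0P) /= eq_sym; case: eqP.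
Qed.

Lemma refines_merge_blocks (P : {set {set T}}) (D N : {set T}) :
  partition P D -> refines P (merge_blocks P N).
Proof.
move=> partP B BP; have [BN | nBN] := boolP (B \subset N).
  exists N => //; rewrite mem_merge_blocks eqxx andbT.
  by rewrite (subset_neq0 BN (partition_neq0 partP BP)) orbT.
by exists B; rewrite // mem_merge_blocks BP nBN.
Qed.

Lemma notmin_sub_cover (A : {set {set T}}) (W : {set T}) (w : T) :
  notmin e w W A \subset cover A.
Proof. by apply/bigcupsP => B /andP [BA _]; apply: bigcup_sup. Qed.

Lemma notmin_union_of_blocks (A : {set {set T}}) (W : {set T}) (w : T) :
  trivIset A ->
  {in A, forall B : {set T},
     B \subset notmin e w W A \/ [disjoint B & notmin e w W A]}.
Proof.
move=> trivA B BA; have [minB | notminB] := boolP (nmin e W B w).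
  right; apply/bigcup_disjointP => C /andP [CA notminC].
  by apply: (trivIsetP trivA) => //; apply: contraNneq notminC => <-.
by left; apply: bigcup_sup; rewrite BA.
Qed.

Lemma nmin_disjoint_notmin (A : {set {set T}}) (W B : {set T}) (w : T) :
  B \subset cover A -> [disjoint B & notmin e w W A] -> nmin e W B w.
Proof.
move=> BA dBN; apply/forallP => y; apply/implyP => yW.
apply/subsetP => z; rewrite inE => /andP [wz zB].
have /bigcupP [C CA zC] := subsetP BA z zB.
have [minC | notminC] := boolP (nmin e W C w).
  by move/forallP/(_ y)/implyP/(_ yW)/subsetP: minC; apply; rewrite inE wz.
suff zN : z \in notmin e w W A by rewrite (disjointFl dBN zN) in zB.
by apply/bigcupP; exists C; rewrite ?CA.
Qed.

Lemma removable_all_but_one (BB : {set {set T}}) (Y : {set T}) (x : T)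
    (B0 : {set T}) :
  {in BB, forall B, B != B0 -> nmin e Y B x} -> removable e BB Y x.
Proof.
move=> minB; rewrite /removable; case: (boolP (B0 \in BB)) => B0BB.
  rewrite (cardsD1 B0 BB) B0BB add1n subn1 /=; apply: subset_leq_card.
  by apply/subsetP => B; rewrite !inE => /andP [nB0 BBB]; rewrite BBB minB.
apply: leq_trans (leq_subr 1 _) _; apply: subset_leq_card.
apply/subsetP => B BBB; rewrite inE BBB minB //.
by apply: contraNneq B0BB => <-.
Qed.

Lemma removable_after_merge (A A' : {set {set T}}) (D W : {set T}) (w : T) :
  partition A D -> partition A' D ->
  refines (merge_blocks A (notmin e w W A)) A' -> removable e A' W w.
Proof.
move=> partA partA' AA'; set N := notmin e w W A in AA'.
have [B0 NB0 disjB0] : exists2 B0 : {set T}, N \subset B0 &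
    {in A', forall B, B != B0 -> [disjoint B & N]}.
  have [N0 | nN0] := eqVneq N set0.
    by exists set0 => [|B _ _]; rewrite N0 ?subxx -?setI_eq0 ?setI0.
  have NM : N \in merge_blocks A N by rewrite mem_merge_blocks nN0 eqxx orbT.
  have [B0 B0A' NB0] := AA' N NM; exists B0 => // B BA' nB0.
  have trivA' := partition_trivIset partA'.
  exact: disjointWr NB0 (trivIsetP trivA' _ _ BA' B0A' nB0).
apply: (removable_all_but_one (B0 := B0)) => B BA' nB0.
apply: nmin_disjoint_notmin (disjB0 B BA' nB0).
by rewrite (cover_partition partA) -(cover_partition partA'); apply: bigcup_sup.
Qed.

Definition removal_ordering (BB : {set {set T}}) (W : {set T}) : Prop :=
  exists s : seq T, [/\ uniq s, [set x in s] = W & removable_seq e BB s].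

Lemma removal_ordering0 (BB : {set {set T}}) : removal_ordering BB set0.
Proof. by exists [::]; split => //; apply/setP => x; rewrite !inE. Qed.

Lemma removal_ordering_cons (BB : {set {set T}}) (W : {set T}) (w : T) :
  w \in W -> removable e BB W w -> removal_ordering BB (W :\ w) ->
  removal_ordering BB W.
Proof.
move=> wW rem [s [us sW rs]].
have ws : w \notin s by rewrite -(in_set (fun x => x \in s)) sW setD11.
have wsW : [set x in w :: s] = W.
  apply/setP => x; rewrite inE in_cons -(in_set (fun x => x \in s)) sW !inE.
  by case: eqP => // ->.
by exists (w :: s); split; rewrite /= ?ws ?wsW.
Qed.

Lemma gp_loop_sound (X : {set T}) A W A' :
  gp_loop e X A W A' -> partition A (~: X) ->
  {in A, forall B, Xinterval e (X :|: B) X} ->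
  [/\ partition A' (~: X), refines A A',
      {in A', forall B, Xinterval e (X :|: B) X} & removal_ordering A' W].
Proof.
elim=> {A W A'} [A partA intA | A W w A' wW intN _ IH partA intA].
  by split; [| exact: refines_refl | | exact: removal_ordering0].
set N := notmin e w W A in intN IH.
have coverA := cover_partition partA.
have unionN := notmin_union_of_blocks W w (partition_trivIset partA).
have ND : N \subset ~: X by rewrite -coverA notmin_sub_cover.
have intM : {in merge_blocks A N, forall B, Xinterval e (X :|: B) X}.
  move=> B; rewrite mem_merge_blocks.
  by case/orP => [/andP [/intA] | /andP [_ /eqP ->]].
have [partA' AA' intA' ordA'] :=
  IH (partition_merge_blocks partA ND unionN) intM.
split => //; first exact: refines_trans (refines_merge_blocks N partA) AA'.
apply: removal_ordering_cons ordA' => //.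
exact: removable_after_merge partA partA' AA'.
Qed.

End GoodPartition.

Theorem lemma3 (T : finType) (e : rel T) (e_sym : symmetric e)
    (e_irr : irreflexive e) (X : {set T}) (A : {set {set T}}) :
  GP_returns e X A -> good_partition e X A.
Proof.
case=> _ maxX intCC loop.
have partCC := partition_CC (~: X) e_sym.
have [partA CCA intA ordA] := gp_loop_sound loop partCC intCC.
by split.
Qed.
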